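(* Let $p\in(0,1)$. There exists a constant $C_1<\infty$ depending only on $p$ such that the following holds. For every $n\in\mathbb{N}$, let $\xi_1,\dots,\xi_n$ be independent Bernoulli random variables with parameter $p$, and identify a realization with the set $\{i\in[1,n]_{\mathbb{Z}}:\xi_i=1\}$. Then for every Sperner family $\mathcal{A}_n$ of subsets of $[1,n]_{\mathbb{Z}}$, regarded as the event $\{\{i:\xi_i=1\}\in\mathcal{A}_n\}$, we have $\mathbb{P}[\mathcal{A}_n]\le C_1/\sqrt{n}$.
   Context: $[1,n]_{\mathbb{Z}}=\{1,\dots,n\}$. A collection $\mathcal{A}_n$ of subsets of $[1,n]_{\mathbb{Z}}$ is called a Sperner family if for each $A\in\mathcal{A}_n$ at least one of the following holds: (1) there exists $B_A\subset[1,n]_{\mathbb{Z}}\setminus A$ with $|B_A|\ge n/2$ such that every $A'\supset A$ with $A'\cap B_A\neq\emptyset$ satisfies $A'\notin\mathcal{A}_n$; (2) there exists $B'_A\subset A$ with $|B'_A|\ge n/2$ such that every $A'\subset A$ with $B'_A\setminus A'\ne\emptyset$ satisfies $A'\notin\mathcal{A}_n$. *)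

From HB Require Import structures.
From mathcomp Require Import all_boot all_order all_algebra.
From mathcomp Require Import reals.
Set Implicit Arguments. Unset Strict Implicit. Unset Printing Implicit Defensive.
Import Order.TTheory GRing.Theory Num.Theory.

(* The ground set [1,n] is modelled by 'I_n; subsets are {set 'I_n};
   a family of subsets is a {set {set 'I_n}}. *)

(* Generalized Sperner family, exactly as in the paper's definition:
   for each A in F, either
   (1) there is B disjoint from A with |B| >= n/2 such that no A' ⊇ A
       meeting B belongs to F, or
   (2) there is B' ⊆ A with |B'| >= n/2 such that no A' ⊆ A not
       containing B' belongs to F.
   |B| >= n/2 is written n <= 2 * #|B| (exact, in nat). *)
Definition sperner (n : nat) (F : {set {set 'I_n}}) : Prop :=
  forall A : {set 'I_n}, A \in F ->
    (exists B : {set 'I_n},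
        [/\ B \subset ~: A, (n <= 2 * #|B|)%N &
            forall A' : {set 'I_n}, A \subset A' -> ~~ [disjoint A' & B] ->
              A' \notin F])
    \/
    (exists B' : {set 'I_n},
        [/\ B' \subset A, (n <= 2 * #|B'|)%N &
            forall A' : {set 'I_n}, A' \subset A -> ~~ (B' \subset A') ->
              A' \notin F]).

(* Probability, under independent Bernoulli(p) coordinates xi_1..xi_n,
   that the random set {i | xi_i = 1} lies in F (product measure). *)
Definition bernoulli_prob (R : realType) (p : R) (n : nat)
    (F : {set {set 'I_n}}) : R :=
  (\sum_(S in F) p ^+ #|S| * (1 - p) ^+ (n - #|S|))%R.

From mathcomp Require Import all_boot all_order all_algebra.
From mathcomp Require Import reals.
From mathcomp Require Import ring lra zify.
Import Order.TTheory GRing.Theory Num.Theory.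

(* Each term of [bernoulli_prob p F] equals [binom_pmf p n #|S| / 'C(n, #|S|)], so it
   suffices to bound the binomial pmf by [sqrt (8 / (n p (1 - p)))] and the LYM-type sum
   [\sum_(S in F) 1 / 'C(n, #|S|)] by 4.
   Left of the mean, the ratio of consecutive pmf values gives
   [b (m + j) >= b m (1 - j^2 / t)] with [t = n p (1 - p)], so [b] stays above [b m / 2]
   on a window of length about [sqrt (t / 2)]; as the window carries mass at most 1,
   [b m = O (1 / sqrt t)]. The right of the mean follows by the symmetry [p <-> 1 - p].
   Members of F with a witness of the first kind form a family of that kind, and so do
   the complements of the other members. For such a family G, count pairs (maximal chain
   from A up to the full set, member of G on it): by downward induction on A there are at
   most [2 (n - |A|)!] of them, because when A is in G no chain leaving A through the witness B
   meets G again, and [|B| >= n/2] pays for A itself. At A = set0 this reads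
   [\sum_(S in G) |S|! (n - |S|)! <= 2 n!]. *)

Section UpperSperner.
Variable n : nat.
Implicit Types (A B : {set 'I_n}) (F G : {set {set 'I_n}}).

(* Clause (1) of [sperner], as a boolean so that it can select a subfamily. *)
Definition upper_witness G A B : bool :=
  [&& B \subset ~: A, n <= 2 * #|B| &
      [forall A' : {set 'I_n}, (A \subset A') && ~~ [disjoint A' & B] ==> (A' \notin G)]].

Definition upper_sperner G : Prop :=
  forall A, A \in G -> exists B, upper_witness G A B.

(* The number of pairs (maximal chain from A to the full set, member of G on it). *)
Definition chain_count G A : nat :=
  \sum_(A' in G | A \subset A') #|A' :\: A|`! * #|~: A'|`!.

Lemma chain_count_rec G A :
  chain_count G A = (A \in G) * #|~: A|`! + \sum_(b in ~: A) chain_count G (b |: A).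
Proof.
rewrite /chain_count (exchange_big_dep (mem G)) /=; last by move=> b A' _ /andP[].
have fact_split d : d`! = (d == 0) + d * d.-1`! by case: d => [|d] //; rewrite factS.
rewrite (eq_bigr (fun A' => (A' == A) * #|~: A'|`! +
                            #|A' :\: A| * #|A' :\: A|.-1`! * #|~: A'|`!)); last first.
  move=> A' /andP[_ sAA']; rewrite fact_split mulnDl; congr (_ * _ + _).
  by rewrite cards_eq0 setD_eq0 eqEsubset sAA' andbT.
rewrite big_split /=; congr (_ + _).
  rewrite big_mkcond (bigD1 A) //= subxx andbT eqxx mul1n big1 ?addn0.
    by case: (A \in G); rewrite ?mul1n ?mul0n.
  by move=> A' nA'A; rewrite (negbTE nA'A) mul0n if_same.
rewrite big_mkcondr /=; apply: eq_bigr => A' A'G; rewrite A'G /=.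
have [sAA'|nsAA'] := boolP (A \subset A'); last first.
  by rewrite big_pred0 // => b; rewrite subUset (negbTE nsAA') !andbF.
rewrite (eq_bigl (mem (A' :\: A))) => [|b]; last first.
  by rewrite !inE subUset sub1set sAA' andbT andbC.
rewrite -mulnA -sum_nat_const; apply: eq_bigr => b bA'A.
by rewrite setUC -setDDl [#|A' :\: A|](cardsD1 b) bA'A add1n.
Qed.

Lemma chain_count_le G A : upper_sperner G -> chain_count G A <= 2 * #|~: A|`!.
Proof.
move=> sG; move hk: #|~: A| => k; elim: k A hk => [|k IH] A hk.
  move: (hk); rewrite chain_count_rec => /eqP; rewrite cards_eq0 => /eqP->.
  by rewrite big_set0 addn0 cards0; case: (A \in G).
have IH' b : b \in ~: A -> chain_count G (b |: A) <= 2 * k`!.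
  move=> bA; apply: IH; rewrite setCU setIC -setDE.
  by move: hk; rewrite (cardsD1 b) bA add1n => -[].
have sum_le (S : {set 'I_n}) : S \subset ~: A ->
    \sum_(b in S) chain_count G (b |: A) <= #|S| * (2 * k`!).
  move=> sSA; apply: (@leq_trans (\sum_(b in S) 2 * k`!)); last by rewrite sum_nat_const.
  by apply: leq_sum => b /(subsetP sSA)/IH'.
rewrite chain_count_rec hk factS.
have [AG|nAG] := boolP (A \in G); last first.
  by rewrite mul0n add0n mulnCA -hk sum_le.
have [B /and3P[sBA nB /forallP noG]] := sG A AG.
have k_le : k.+1 <= n by rewrite -hk; apply: leq_trans (max_card _) _; rewrite card_ord.
rewrite (big_setID B) /= big1 ?add0n => [|b /setIP[_ bB]]; last first.
  apply: big_pred0 => A'; apply/negbTE/andP => -[A'G].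
  rewrite subUset sub1set => /andP[bA' sAA'].
  have /(implyP (noG A')) : (A \subset A') && ~~ [disjoint A' & B].
    by rewrite sAA'; apply/negP => dis; rewrite (disjointFr dis bA') in bB.
  by rewrite A'G.
apply: leq_trans (leq_add (leqnn _) (sum_le _ (subsetDl (~: A) B))) _.
rewrite cardsD (setIidPr sBA) hk.
have : k.+1 <= 2 * #|B| := leq_trans k_le nB.
move: (k`!) => f; nia.
Qed.

Lemma upper_sperner_lym G : upper_sperner G ->
  \sum_(A in G) #|A|`! * #|~: A|`! <= 2 * n`!.
Proof.
move=> sG; have := @chain_count_le G set0 sG.
rewrite /chain_count setC0 cardsT card_ord.
by under eq_bigl do rewrite sub0set andbT; under eq_bigr do rewrite setD0.
Qed.

Definition upper_part F := [set A in F | [exists B, upper_witness F A B]].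

Lemma upper_witnessS G F A B :
  G \subset F -> upper_witness F A B -> upper_witness G A B.
Proof.
move=> sGF /and3P[sBA nB /forallP noF]; rewrite /upper_witness sBA nB.
apply/forallP => A'.
by apply/implyP => /(implyP (noF A')); apply: contra; apply: (subsetP sGF).
Qed.

Lemma upper_part_sub F : upper_part F \subset F.
Proof. by apply/subsetP => A; rewrite inE => /andP[]. Qed.

Lemma upper_sperner_upper_part F : upper_sperner (upper_part F).
Proof.
move=> A; rewrite inE => /andP[_ /existsP[B wB]].
by exists B; apply: upper_witnessS (upper_part_sub F) wB.
Qed.

Lemma upper_sperner_compl_lower_part F :
  sperner F -> upper_sperner [set ~: A | A in F :\: upper_part F].
Proof.
move=> spF _ /imsetP[A /setDP[AF nAU] ->].
have [[B [sBA nB noF]]|[B [sBA nB noF]]] := spF A AF.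
  case/negP: nAU; rewrite inE AF; apply/existsP; exists B.
  by rewrite /upper_witness sBA nB; apply/forallP => A'; apply/implyP => /andP[]; apply: noF.
exists B; rewrite /upper_witness setCK sBA nB; apply/forallP => X.
apply/implyP => /andP[sAX meetB]; apply/imsetP => -[A' /setDP[A'F _] eX].
rewrite eX setCS in sAX; rewrite eX disjoints_subset setCS in meetB.
by rewrite (negbTE (noF A' sAX meetB)) in A'F.
Qed.

Lemma sperner_lym F : sperner F -> \sum_(A in F) #|A|`! * #|~: A|`! <= 4 * n`!.
Proof.
move=> spF; rewrite (big_setID (upper_part F)) /= (setIidPr (upper_part_sub F)).
have -> : \sum_(A in F :\: upper_part F) #|A|`! * #|~: A|`! =
    \sum_(X in [set ~: A | A in F :\: upper_part F]) #|X|`! * #|~: X|`!.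
  rewrite big_imset /=; last exact: in2W (@setC_inj _).
  by apply: eq_bigr => A _; rewrite setCK mulnC.
have -> : 4 * n`! = 2 * n`! + 2 * n`! by rewrite -mulnDl.
apply: leq_add; apply: upper_sperner_lym.
  exact: upper_sperner_upper_part.
exact: upper_sperner_compl_lower_part.
Qed.

End UpperSperner.

Local Open Scope ring_scope.

Section BinomialPmf.
Context {R : realFieldType}.
Implicit Types p : R.

Definition binom_pmf p (n k : nat) : R := 'C(n, k)%:R * p ^+ k * (1 - p) ^+ (n - k).

Lemma binom_pmf_ge0 p n k : 0 <= p <= 1 -> 0 <= binom_pmf p n k.
Proof.
case/andP=> p0 p1; rewrite /binom_pmf.
by rewrite !mulr_ge0 ?exprn_ge0 // subr_ge0.
Qed.

Lemma binom_pmf_small p n k : (n < k)%N -> binom_pmf p n k = 0.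
Proof. by move=> nk; rewrite /binom_pmf bin_small // !mul0r. Qed.

Lemma sum_binom_pmf p n : \sum_(k < n.+1) binom_pmf p n k = 1.
Proof.
rewrite -[RHS](expr1n _ n) -[1 in RHS](subrK p) exprDn.
by apply: eq_bigr => k _; rewrite /binom_pmf -mulr_natl; ring.
Qed.

Lemma binom_pmfC p n k : (k <= n)%N -> binom_pmf p n k = binom_pmf (1 - p) n (n - k).
Proof.
move=> kn; rewrite /binom_pmf bin_sub // subKn //.
have -> : 1 - (1 - p) = p by ring.
by rewrite mulrAC.
Qed.

Lemma binom_pmf_mul_fact p n k : (k <= n)%N ->
  binom_pmf p n k * (k`! * (n - k)`!)%:R = p ^+ k * (1 - p) ^+ (n - k) * n`!%:R.
Proof. by move=> kn; rewrite /binom_pmf -(bin_fact kn) !natrM; ring. Qed.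

Lemma binom_pmfS p n k :
  binom_pmf p n k.+1 * k.+1%:R * (1 - p) = binom_pmf p n k * (n - k)%:R * p.
Proof.
rewrite /binom_pmf; case: (ltnP k n) => [kn|nk]; last first.
  by rewrite bin_small ?ltnS // (eqP nk) !mul0r mulr0 mul0r.
have -> : (n - k = (n - k.+1).+1)%N by rewrite subnSK.
have binS : ('C(n, k.+1) * k.+1 = 'C(n, k) * (n - k.+1).+1)%N.
  by rewrite mulnC -mul_bin_diag mul_bin_down subnSK // mulnC.
have binSR : 'C(n, k.+1)%:R * k.+1%:R = 'C(n, k)%:R * (n - k.+1).+1%:R :> R.
  by rewrite -!natrM binS.
rewrite !exprS; transitivity
  ('C(n, k.+1)%:R * k.+1%:R * p ^+ k * (1 - p) ^+ (n - k.+1) * p * (1 - p)); first ring.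
by rewrite binSR; ring.
Qed.

Lemma binom_pmf_window_le1 p n m K : 0 <= p <= 1 ->
  \sum_(j < K) binom_pmf p n (m + j) <= 1.
Proof.
move=> p01; have b0 k : 0 <= binom_pmf p n k by exact: binom_pmf_ge0.
have -> : \sum_(j < K) binom_pmf p n (m + j) = \sum_(m <= i < m + K) binom_pmf p n i.
  by rewrite -[in RHS](add0n m) big_addn addKn big_mkord; apply: eq_bigr => j _; rewrite addnC.
apply: (@le_trans _ _ (\sum_(0 <= i < m + K + n.+1) binom_pmf p n i)).
  rewrite [leRHS](@big_cat_nat _ _ _ (m + K)) ?leq_addr //=.
  rewrite [in leRHS](@big_cat_nat _ _ _ m) ?leq_addr //= addrAC lerDr.
  by rewrite addr_ge0 ?sumr_ge0.
rewrite (@big_cat_nat _ _ _ n.+1) ?leq_addl //= big_mkord sum_binom_pmf.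
by rewrite big_nat_cond big1 ?addr0 // => i /andP[/andP[ni _] _]; rewrite binom_pmf_small.
Qed.

End BinomialPmf.

Section BinomialPmfBound.
Variables (R : realFieldType) (p : R) (n : nat).
Hypotheses (p_gt0 : 0 < p) (p_lt1 : p < 1).
Let t : R := n%:R * (p * (1 - p)).
Let b := binom_pmf p n.

Let p_01 : 0 <= p <= 1.
Proof. by rewrite !ltW. Qed.

Let b_ge0 k : 0 <= b k.
Proof. exact: binom_pmf_ge0. Qed.

Let t_ge0 : 0 <= t.
Proof. by rewrite /t mulr_ge0 // mulr_ge0 ?subr_ge0 ?ltW. Qed.

Lemma binom_pmf_step m j : m%:R <= n%:R * p ->
  b (m + j) * (t - j.+1%:R) <= b (m + j).+1 * t.
Proof.
move=> m_le; set x : R := j.+1%:R.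
have [t_le_x|x_lt_t] := lerP t x.
  by apply: le_trans (mulr_ge0 (b_ge0 _) t_ge0); rewrite mulr_ge0_le0 // subr_le0.
have mx_gt0 : 0 < (m%:R + x) * (1 - p) by rewrite mulr_gt0 ?subr_gt0 // ltr_wpDl ?ltr0Sn.
have nk_ge : n%:R - m%:R - j%:R <= (n - (m + j))%:R :> R.
  have [mj_le|n_lt] := leqP (m + j) n; first by rewrite natrB // natrD opprD addrA.
  rewrite (eqP (ltnW n_lt)) /x; rewrite -(ltr_nat R) natrD in n_lt; lra.
(* [m <= n p] is used on both sides, together with [n p (1 - p) = t]. *)
have key : (t - x) * (m%:R + x) * (1 - p) <= t * (n - (m + j))%:R * p.
  have h1 : 0 <= t * p * ((n - (m + j))%:R - (n%:R - m%:R - j%:R)).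
    by rewrite !mulr_ge0 ?subr_ge0 // ltW.
  have h2 : 0 <= (t - x) * (1 - p) * (n%:R * p - m%:R).
    by rewrite !mulr_ge0 ?subr_ge0 // ltW.
  have h3 : 0 <= t * p * (n%:R * p - m%:R) by rewrite !mulr_ge0 ?subr_ge0 // ltW.
  have h4 : 0 <= t * p + x ^+ 2 * (1 - p) by rewrite addr_ge0 ?mulr_ge0 ?subr_ge0 // ltW.
  move: h1 h2 h3 h4; rewrite /x /t -natr1; lra.
have rec := binom_pmfS p n (m + j).
have mjS : (m + j).+1%:R = m%:R + x :> R by rewrite -addnS natrD.
rewrite mjS in rec.
rewrite -(ler_pM2r mx_gt0).
have -> : b (m + j).+1 * t * ((m%:R + x) * (1 - p)) =
    t * (b (m + j).+1 * (m%:R + x) * (1 - p)) by ring.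
have := ler_wpM2l (b_ge0 (m + j)) key.
rewrite rec -/b; lra.
Qed.

Lemma binom_pmf_growth m j : m%:R <= n%:R * p ->
  b m * (t - j%:R ^+ 2) <= b (m + j) * t.
Proof.
move=> m_le; elim: j => [|j IH].
  by rewrite addn0 mulr0n expr2 mulr0 subr0.
have [x2_le|t_lt] := lerP (j.+1%:R ^+ 2) t; last first.
  apply: le_trans (mulr_ge0 (b_ge0 _) t_ge0).
  by rewrite mulr_ge0_le0 // subr_le0 ltW.
have x_le : j.+1%:R <= t.
  by apply: le_trans x2_le; rewrite expr2 ler_peMl // ler1n.
have t_gt0 : 0 < t by apply: lt_le_trans x_le; rewrite ltr0Sn.
rewrite -(ler_pM2r t_gt0) addnS.
have f1 : 0 <= b m * (t * j%:R + j%:R ^+ 2 * j.+1%:R).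
  apply: mulr_ge0 (b_ge0 m) (addr_ge0 (mulr_ge0 t_ge0 _) _) => //.
  by rewrite mulr_ge0 ?exprn_ge0.
have f2 : b m * (t - j%:R ^+ 2) * (t - j.+1%:R) <= b (m + j) * t * (t - j.+1%:R).
  by rewrite ler_wpM2r // subr_ge0.
have f3 := ler_wpM2r t_ge0 (binom_pmf_step m j m_le).
move: f1 f2 f3; rewrite -natr1; lra.
Qed.

Lemma binom_pmf_half m j : m%:R <= n%:R * p -> 2 * j%:R ^+ 2 <= t ->
  b m <= 2 * b (m + j).
Proof.
move=> m_le j_le; have [->|j_gt0] := posnP j.
  by rewrite addn0 mulr_natl mulr2n lerDl b_ge0.
have t_gt0 : 0 < t.
  apply: lt_le_trans j_le; rewrite mulr_gt0 ?exprn_gt0 ?ltr0n //.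
have grow := binom_pmf_growth m j m_le.
have slack : 0 <= b m * (t - 2 * j%:R ^+ 2) by rewrite mulr_ge0 ?b_ge0 ?subr_ge0.
rewrite -(ler_pM2r t_gt0); lra.
Qed.

Lemma binom_pmf_sqr_le_left m : m%:R <= n%:R * p -> b m ^+ 2 * t <= 8.
Proof.
move=> m_le; have [->|t_neq0] := eqVneq t 0; first by rewrite mulr0.
have t_gt0 : 0 < t by rewrite lt_def t_neq0 t_ge0.
have ex_K : exists K, t < 2 * K%:R ^+ 2.
  exists n.+1; have : t <= n%:R by rewrite /t ler_piMr //; nra.
  rewrite -natr1; have := ler0n R n; nra.
case: (ex_minnP ex_K) => K t_lt K_min.
have half j : (j < K)%N -> b m <= 2 * b (m + j).
  by move=> jK; apply: binom_pmf_half => //; rewrite leNgt; apply/negP => /K_min; rewrite leqNgt jK.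
have Kb_le : K%:R * b m <= 2.
  have -> : K%:R * b m = \sum_(j < K) b m by rewrite sumr_const card_ord mulr_natl.
  apply: le_trans (_ : \sum_(j < K) 2 * b (m + j) <= 2).
    by apply: ler_sum => j _; apply: half.
  by rewrite -mulr_sumr; have := binom_pmf_window_le1 p n m K p_01; rewrite -/b; lra.
have Kb_ge0 : 0 <= K%:R * b m by rewrite mulr_ge0 ?b_ge0.
have := ler_wpM2l Kb_ge0 Kb_le; have := ler_wpM2l (sqr_ge0 (b m)) (ltW t_lt).
rewrite !expr2; lra.
Qed.

End BinomialPmfBound.

Lemma binom_pmf_sqr_le (R : realFieldType) (p : R) n k : 0 < p -> p < 1 ->
  binom_pmf p n k ^+ 2 * (n%:R * (p * (1 - p))) <= 8.
Proof.
move=> p_gt0 p_lt1; have [n_lt|k_le] := ltnP n k.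
  by rewrite binom_pmf_small // expr2 !mul0r.
have [k_left|k_right] := lerP k%:R (n%:R * p); first exact: binom_pmf_sqr_le_left.
rewrite binom_pmfC // (_ : p * (1 - p) = (1 - p) * (1 - (1 - p))); last by ring.
apply: binom_pmf_sqr_le_left; rewrite ?natrB //; lra.
Qed.

Lemma binom_pmf_le_sqrt (R : rcfType) (p : R) n k : 0 < p -> p < 1 -> (0 < n)%N ->
  binom_pmf p n k <= Num.sqrt (8 / (p * (1 - p))) / Num.sqrt n%:R.
Proof.
move=> p_gt0 p_lt1 n_gt0.
have pq_gt0 : 0 < p * (1 - p) by rewrite mulr_gt0 ?subr_gt0.
have sqrtn_gt0 : 0 < Num.sqrt n%:R :> R by rewrite sqrtr_gt0 ltr0n.
have b_ge0 : 0 <= binom_pmf p n k by rewrite binom_pmf_ge0 ?ltW.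
rewrite ler_pdivlMr // -[binom_pmf _ _ _]ger0_norm // -sqrtr_sqr -sqrtrM ?sqr_ge0 //.
rewrite ler_sqrt ?divr_ge0 ?(ltW pq_gt0) // ler_pdivlMr //.
by rewrite -mulrA; exact: binom_pmf_sqr_le.
Qed.

Lemma bernoulli_prob_le_sperner (R : realType) (p M : R) n (F : {set {set 'I_n}}) :
  sperner F -> (forall k, binom_pmf p n k <= M) -> bernoulli_prob p F <= 4 * M.
Proof.
move=> spF b_le.
have M_ge0 : 0 <= M.
  have := @ler_sum _ _ (index_enum 'I_n.+1) xpredT _ (fun=> M) (fun k _ => b_le k).
  rewrite sum_binom_pmf sumr_const card_ord -(pmulrn_lge0 _ (ltn0Sn n)).
  exact: le_trans.
have fact_gt0R : 0 < n`!%:R :> R by rewrite ltr0n fact_gt0.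
rewrite /bernoulli_prob -(ler_pM2r fact_gt0R) mulr_suml.
apply: (@le_trans _ _ (\sum_(S in F) M * (#|S|`! * #|~: S|`!)%:R)).
  apply: ler_sum => S _.
  have S_le : (#|S| <= n)%N by apply: leq_trans (max_card _) _; rewrite card_ord.
  rewrite [#|~: S|]cardsCs setCK card_ord -binom_pmf_mul_fact //.
  by rewrite ler_wpM2r.
rewrite -mulr_sumr -natr_sum -mulrA mulrCA -natrM ler_wpM2l // ler_nat.
exact: sperner_lym.
Qed.

Theorem proposition2p2 (R : realType) (p : R) :
  0 < p -> p < 1 ->
  exists C1 : R,
    forall (n : nat), (0 < n)%N ->
    forall F : {set {set 'I_n}}, sperner F ->
      bernoulli_prob p F <= C1 / Num.sqrt (n%:R).
Proof.
move=> p_gt0 p_lt1; exists (4 * Num.sqrt (8 / (p * (1 - p)))) => n n_gt0 F spF.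
rewrite -mulrA; apply: bernoulli_prob_le_sperner spF _ => k.
exact: binom_pmf_le_sqrt.
Qed.
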